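(* Let $p\in(0,1)$, let $X,\gamma$ satisfy the standing assumptions in the context, let $m>0$ and $0\le x_0<m$. Let $q'=\inf\{\mathrm{VaR}_p(g(X)):g\in\mathcal G_{\rm bd}\}$ and assume $q'>0$ and $\mathbb P(\gamma\le\mathrm{VaR}_p(\gamma))=p$. Then the problem of minimizing $\mathrm{VaR}_p(g(X))$ over $g\in\mathcal G_{\rm bd}$ admits a $\mathbb P$-a.s. unique solution, given by $g_X(X)=m\mathds 1_{\{\gamma>c\}}+q'\mathds 1_{\{\gamma\le c\}}$, where $c=\mathrm{VaR}_p(\gamma)$.
   Context: $(\Omega,\mathcal F,\mathbb P)$ is atomless. $\mathrm{VaR}_p(Y)=\inf\{x:\mathbb P(Y\le x)\ge p\}$. Standing assumptions: $X\ge0$ is a random variable whose distribution has a positive density on its support; $\gamma:\mathbb R\to\mathbb R$ is continuous and strictly positive; $\gamma$ also denotes $\gamma(X)$; $\mathbb E[\gamma]=1$, $\mathbb E[\gamma X]<\infty$. With $\mathcal G_1$ the measurable functions $\mathbb R\to\mathbb R$, $\mathcal G_{\rm bd}=\{g\in\mathcal G_1:\mathbb E[\gamma g(X)]\ge x_0,\ 0\le g(X)\le m\}$. *)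

From HB Require Import structures.
From mathcomp Require Import all_boot all_order all_algebra.
From mathcomp Require Import all_classical all_reals all_analysis.
Set Implicit Arguments. Unset Strict Implicit. Unset Printing Implicit Defensive.
Import Order.TTheory GRing.Theory Num.Theory.
Import numFieldNormedType.Exports.
Local Open Scope classical_set_scope.
Local Open Scope ring_scope.

Definition VaR (d : measure_display) (T : measurableType d) (R : realType)
  (P : probability T R) (p : R) (Y : T -> R) : R :=
  inf [set x : R | (p%:E <= P [set w | (Y w <= x)%R])%E].

Definition atomless (d : measure_display) (T : measurableType d) (R : realType)
  (P : probability T R) : Prop :=
  forall A : set T, measurable A -> (0 < P A)%E ->
    exists B : set T, [/\ measurable B, B `<=` A, (0 < P B)%E & (P B < P A)%E].

Definition dist_support (d : measure_display) (T : measurableType d) (R : realType)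
  (P : probability T R) (X : T -> R) : set R :=
  [set x : R | forall e : R, 0 < e -> (0 < P (X @^-1` `](x - e)%R, (x + e)%R[))%E].

Definition has_pos_density_on_support (d : measure_display) (T : measurableType d)
  (R : realType) (P : probability T R) (X : T -> R) : Prop :=
  exists f : R -> R, [/\ measurable_fun setT f, (forall x, 0 <= f x),
    (forall A : set R, measurable A ->
       P (X @^-1` A) = (\int[@lebesgue_measure R]_(x in A) (f x)%:E)%E)
    & (forall x, dist_support P X x -> 0 < f x)].

Definition Gbd (d : measure_display) (T : measurableType d) (R : realType)
  (P : probability T R) (X : T -> R) (gamma : R -> R) (x0 m : R) : set (R -> R) :=
  [set g : R -> R | [/\ measurable_fun setT g,
     (x0%:E <= \int[P]_w (gamma (X w) * g (X w))%:E)%E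
     & (forall w, (0 <= g (X w) <= m)%R)]].

From HB Require Import structures.
From mathcomp Require Import all_boot all_order all_algebra.
From mathcomp Require Import all_classical all_reals all_analysis.
From mathcomp Require Import ring lra measurable_realfun.
Set Implicit Arguments. Unset Strict Implicit. Unset Printing Implicit Defensive.
Import Order.TTheory GRing.Theory Num.Theory.
Import numFieldNormedType.Exports.
Local Open Scope classical_set_scope.
Local Open Scope ring_scope.

(* Write B = {gamma(X) <= c}, so that P(B) = p, and compare a payoff Y with values in [0, m]
   and VaR v with the step payoff G_v = m 1_{gamma > c} + v 1_B.  Pointwise
     gamma (G_v - Y) >= (m - v) c (1_{Y <= v} - 1_B),
   and integrating, with P(Y <= v) >= p = P(B), gives
     E[gamma Y] <= E[gamma G_v] = m - (m - v) beta,   where beta = E[gamma 1_B].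
   Hence every admissible g satisfies x0 <= m - (m - VaR(g(X))) beta, and so does the
   infimum q': G_{q'} is admissible with VaR at most q', hence optimal.  As q' > 0
   the budget is exhausted (a smaller level would otherwise still be admissible), so for any other
   minimiser the integrated slack vanishes; the slack is then zero a.e., which forces
   {g(X) <= q'} = B and g(X) = G_{q'} almost surely. *)

Section real_facts.
Variable R : realType.
Implicit Types a b k q x y z v m c : R.

Lemma lb_le_mul_inf (S : set R) a k : 0 <= a -> S !=set0 ->
  (forall y, S y -> k <= a * y) -> k <= a * inf S.
Proof.
move=> a0 [y Sy] kS; have [a_eq0|a_neq0] := eqVneq a 0.
  by have := kS y Sy; rewrite a_eq0 !mul0r.
have a_gt0 : 0 < a by rewrite lt_neqAle eq_sym a_neq0.
rewrite -ler_pdivrMl//; apply: lb_le_inf; first by exists y.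
by move=> z Sz; rewrite ler_pdivrMl// kS.
Qed.

Lemma affine_le_below a b x q : 0 <= b -> 0 < q -> x < a + b * q ->
  exists2 y : R, 0 <= y < q & x <= a + b * y.
Proof.
move=> b0 q0 xq; have [bq_le|bq_gt] := leP (b * q) (a + b * q - x).
  by exists 0; [rewrite lexx | rewrite mulr0 addr0; move: bq_le; lra].
have b_gt0 : 0 < b.
  by rewrite lt_def b0 andbT; apply/eqP => b_eq0; move: bq_gt xq; rewrite b_eq0 !mul0r; lra.
exists (q - (a + b * q - x) / b); last by rewrite mulrBr mulrCA divff ?gt_eqF//; lra.
apply/andP; split; last by rewrite gtrBl divr_gt0//; lra.
by rewrite subr_ge0 ler_pdivrMr// [q * b]mulrC ltW.
Qed.

Lemma step_slack_ge0 z y v m c : 0 <= z -> 0 <= y <= m -> v <= m ->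
  (m - v) * c * ((y <= v)%R%:R - (z <= c)%R%:R) <= z * ((if c < z then m else v) - y).
Proof.
move=> z0 /andP[y0 ym] vm.
case: (leP z c) => zc; case: (leP y v) => yv; rewrite /= ?subrr ?mulr0.
- by rewrite mulr_ge0// subr_ge0.
- have h1 : 0 <= z * (m - y) by rewrite mulr_ge0// subr_ge0.
  have h2 : 0 <= (c - z) * (m - v) by rewrite mulr_ge0// subr_ge0.
  by rewrite sub0r mulrN1; nra.
- have h1 : 0 <= z * (v - y) by rewrite mulr_ge0// subr_ge0.
  have h2 : 0 <= (z - c) * (m - v) by rewrite mulr_ge0 // subr_ge0 // (ltW zc).
  by rewrite subr0 mulr1; nra.
- by rewrite mulr_ge0// subr_ge0.
Qed.

Lemma step_slack_eq0_le z y v m c : 0 <= z -> y <= v -> v < m ->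
  z * ((if c < z then m else v) - y) = (m - v) * c * ((y <= v)%R%:R - (z <= c)%R%:R) ->
  z <= c.
Proof.
move=> z0 yv vm; rewrite yv; case: (leP z c) => // zc /=; rewrite subr0 mulr1.
by nra.
Qed.

Lemma step_slack_eq0 z y v m c : 0 < z -> (z <= c -> y <= v) -> (y <= v -> z <= c) ->
  z * ((if c < z then m else v) - y) = (m - v) * c * ((y <= v)%R%:R - (z <= c)%R%:R) ->
  y = if c < z then m else v.
Proof.
move=> z0 zy yz; case: (leP z c) => zc.
  by rewrite zy//= subrr mulr0 => /eqP; rewrite mulf_eq0 gt_eqF//= subr_eq0 eq_sym => /eqP.
have /negbTE-> : ~~ (y <= v) by apply/negP => /yz; rewrite leNgt zc.
by rewrite /= subrr mulr0 => /eqP; rewrite mulf_eq0 gt_eqF//= subr_eq0 eq_sym => /eqP.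
Qed.

End real_facts.

Lemma measurable_fun_le_cst {d} {T : measurableType d} {R : realType} {Y : T -> R} x :
  measurable_fun setT Y -> measurable [set w | Y w <= x].
Proof. by move=> mY; rewrite -[X in measurable X]setTI; exact: measurable_fun_le. Qed.

Section value_at_risk.
Context d (T : measurableType d) (R : realType) (P : probability T R).
Variables (p a : R) (Y : T -> R).
Hypotheses (p_gt0 : 0 < p) (Y_ge : forall w, a <= Y w).

Let level_set := [set x : R | (p%:E <= P [set w | (Y w <= x)%R])%E].

Let lbound_level_set : lbound level_set a.
Proof.
move=> x /=; apply: contra_leT => xa.
have -> : [set w | Y w <= x] = set0.
  by apply/seteqP; split => // w /= Ywx; have := Y_ge w; lra.
by rewrite measure0 lte_fin.
Qed.

Lemma VaR_le x : (p%:E <= P [set w | (Y w <= x)%R])%E -> VaR P p Y <= x.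
Proof. by move=> px; apply: ge_inf => //; exists a. Qed.

Lemma VaR_ge x : (p%:E <= P [set w | (Y w <= x)%R])%E -> a <= VaR P p Y.
Proof. by move=> px; apply: lb_le_inf => //; exists x. Qed.

(* Right-continuity of x |-> P(Y <= x), i.e. continuity from above of P. *)
Lemma VaR_attained x : measurable_fun setT Y ->
  (p%:E <= P [set w | (Y w <= x)%R])%E -> (p%:E <= P [set w | (Y w <= VaR P p Y)%R])%E.
Proof.
move=> mY px; set v := VaR P p Y.
pose F n := [set w | Y w <= v + n.+1%:R^-1].
have mF n : measurable (F n) by exact: measurable_fun_le_cst.
have pF n : (p%:E <= P (F n))%E.
  have [y py yv] : exists2 y, level_set y & y < v + n.+1%:R^-1.
    by apply: inf_adherent; [rewrite invr_gt0 | split; [exists x | exists a]].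
  by apply: (le_trans py); apply: le_measure; rewrite ?inE//;
    [exact: measurable_fun_le_cst | move=> w /= /le_trans; apply; exact: ltW].
have F_noninc : nonincreasing_seq F.
  move=> n k nk; apply/subsetPset => w /= /le_trans; apply.
  by rewrite lerD2l lef_pV2 ?posrE// ler_nat.
have capF : \bigcap_n F n = [set w | Y w <= v].
  apply/seteqP; split => w /=; last first.
    by move=> Yv n _; apply: (le_trans Yv); rewrite lerDl.
  move=> Yv; apply/ler_addgt0Pr => e e0; apply: (le_trans (Yv (Num.Def.trunc e^-1) I)).
  rewrite lerD2l -[leRHS]invrK lef_pV2 ?posrE ?invr_gt0//.
  exact/ltW/truncnS_gt.
have PF0_lty : (P (F 0%N) < +oo)%E := le_lt_trans (probability_le1 P (mF 0%N)) (ltry 1).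
have mcapF : measurable (\bigcap_n F n) by rewrite capF; exact: measurable_fun_le_cst.
have cvgF := nonincreasing_cvg_mu PF0_lty mF mcapF F_noninc.
rewrite -capF -(cvg_lim _ cvgF)//.
by apply: lime_ge; [exact: cvgP cvgF | exact: nearW].
Qed.

Lemma VaR_bounded b : p <= 1 -> measurable_fun setT Y -> (forall w, Y w <= b) ->
  [/\ a <= VaR P p Y, VaR P p Y <= b & (p%:E <= P [set w | (Y w <= VaR P p Y)%R])%E].
Proof.
move=> p_le1 mY Y_le; have pb : (p%:E <= P [set w | (Y w <= b)%R])%E.
  rewrite (_ : [set w | _] = setT) ?probability_setT ?lee_fin//.
  by apply/seteqP; split => w // _; exact: Y_le.
by split; [exact: VaR_ge pb | exact: VaR_le pb | exact: VaR_attained pb].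
Qed.

End value_at_risk.

Lemma ae_imply_of_le_measure d (T : measurableType d) (R : realType)
  (mu : {finite_measure set T -> \bar R}) (A B : set T) :
  measurable A -> measurable B -> {ae mu, forall w, A w -> B w} ->
  (mu B <= mu A)%E -> {ae mu, forall w, B w -> A w}.
Proof.
move=> mA mB [N [mN muN0 notAB_N]] muBA.
exists (B `\` A); split => [||w /= nBA]; first exact: measurableD; last first.
  by split; [apply: contrapT => nBw; apply: nBA | apply: contra_not nBA].
apply/eqP; rewrite eq_le measure_ge0 andbT.
have fin_AB : mu (A `&` B) \is a fin_num by rewrite fin_num_measure//; exact: measurableI.
rewrite -(leeD2rE _ _ fin_AB) add0e (setIC A B) -(measureDI mu mB mA) setIC.
apply: (le_trans muBA); rewrite (measureDI mu mA mB) [X in (X + _)%E](_ : _ = 0) ?add0e//.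
by apply: (subset_measure0 (measurableD mA mB) mN) => // w [Aw nBw]; apply: notAB_N => /(_ Aw).
Qed.

Section integrable_EFin.
Context d (T : measurableType d) (R : realType) (mu : {measure set T -> \bar R}).
Variable D : set T.
Hypothesis mD : measurable D.
Implicit Types f g : T -> R.

Lemma integrableB_EFin f g : mu.-integrable D (EFin \o f) ->
  mu.-integrable D (EFin \o g) -> mu.-integrable D (EFin \o (fun x => f x - g x)).
Proof.
move=> fi gi; apply: (eq_integrable mD _ _ _ (integrableB mD fi gi)).
by move=> x _; rewrite /= EFinB.
Qed.

Lemma integrableZl_EFin k f : mu.-integrable D (EFin \o f) ->
  mu.-integrable D (EFin \o (fun x => k * f x)).
Proof.
move=> fi; apply: (eq_integrable mD _ _ _ (integrableZl mD k fi)).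
by move=> x _; rewrite /= EFinM.
Qed.

End integrable_EFin.

Section step_payoff.
Context d (T : measurableType d) (R : realType) (P : probability T R).
Variables (Z : T -> R) (p m c : R).
Hypotheses (mZ : measurable_fun setT Z) (Z_gt0 : forall w, 0 < Z w)
  (EZ : (\int[P]_w (Z w)%:E = 1%:E)%E) (p_gt0 : 0 < p) (m_ge0 : 0 <= m)
  (c_ge0 : 0 <= c) (PZc : P [set w | Z w <= c] = p%:E).

Local Notation B := [set w | Z w <= c].

Definition step_rv (v : R) (w : T) : R := if c < Z w then m else v.

Definition beta : R := Rintegral P setT (fun w => Z w * \1_B w).

Let mB : measurable B. Proof. exact: measurable_fun_le_cst. Qed.

Let Rintegral_indic (A : set T) : measurable A -> Rintegral P setT (\1_A) = fine (P A).
Proof. by move=> mA; rewrite /Rintegral integral_indic// setIT. Qed.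

Let integrable_Z : P.-integrable setT (EFin \o Z).
Proof.
apply/integrableP; split; first exact/measurable_EFinP.
under eq_integral => w _ do rewrite /= ger0_norm ?(ltW (Z_gt0 w))//.
by rewrite EZ ltry.
Qed.

Lemma integrable_mulZ {h : T -> R} {k : R} : measurable_fun setT h -> (forall w, `|h w| <= k) ->
  P.-integrable setT (EFin \o (fun w => Z w * h w)).
Proof.
move=> mh hk; have bd_h : [bounded h w | w in setT].
  by exists k; split => [|k' kk' w _]; [exact: num_real | exact: le_trans (hk w) (ltW kk')].
apply: (eq_integrable measurableT _ _ _ (integrableMl measurableT integrable_Z mh bd_h)).
by move=> w _; rewrite /= EFinM.
Qed.

Let mem_le (Y : T -> R) v w : (w \in [set w | Y w <= v]) = (Y w <= v).
Proof. by apply/idP/idP; rewrite inE. Qed.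

Let norm_indic_le1 (A : set T) w : `|\1_A w| <= 1 :> R.
Proof. by rewrite indicE; case: (w \in A); rewrite normr_nat. Qed.

Lemma beta_ge0 : 0 <= beta.
Proof. by apply: Rintegral_ge0 => w _; rewrite mulr_ge0// ltW. Qed.

Lemma step_rvE v w : step_rv v w = m - (m - v) * \1_B w.
Proof. by rewrite /step_rv indicE mem_le; case: ltP => _ /=; ring. Qed.

Lemma measurable_step_rv v : measurable_fun setT (step_rv v).
Proof.
rewrite (funext (step_rvE v)); apply: measurable_funB => //.
by apply: measurable_funM => //; exact: measurable_indic.
Qed.

Lemma step_rv_bounds (v : R) : 0 <= v <= m -> forall w, 0 <= step_rv v w <= m.
Proof.
by move=> /andP[v0 vm] w; rewrite /step_rv; case: ltP => _; rewrite ?lexx ?(le_trans v0).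
Qed.

Lemma Rintegral_Z_step v :
  Rintegral P setT (fun w => Z w * step_rv v w) = m - (m - v) * beta.
Proof.
have iZB := integrable_mulZ (measurable_indic mB) (norm_indic_le1 B).
rewrite (@eq_Rintegral _ _ _ _ _ (fun w => m * Z w - (m - v) * (Z w * \1_B w))); last first.
  by move=> w _; rewrite step_rvE; ring.
rewrite RintegralB ?integrableZl_EFin// !RintegralZl//.
by rewrite /Rintegral EZ mulr1.
Qed.

Lemma VaR_step_le (v : R) : 0 <= v -> VaR P p (step_rv v) <= v.
Proof.
move=> v0; apply: (@VaR_le _ _ _ _ _ 0) => // [w|].
  by rewrite /step_rv; case: ltP.
rewrite -PZc; apply: le_measure; rewrite ?inE//.
  exact/measurable_fun_le_cst/measurable_step_rv.
by move=> w /= Zwc; rewrite /step_rv ltNge Zwc.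
Qed.

Definition slack (Y : T -> R) (v : R) (w : T) : R :=
  Z w * step_rv v w - Z w * Y w - (m - v) * c * (\1_[set w | Y w <= v] w - \1_B w).

Section slack.
Variable Y : T -> R.
Hypotheses (mY : measurable_fun setT Y) (Y_bounds : forall w, 0 <= Y w <= m).

Let slackE v w : slack Y v w =
  Z w * ((if c < Z w then m else v) - Y w) - (m - v) * c * ((Y w <= v)%R%:R - (Z w <= c)%R%:R).
Proof. by rewrite /slack /step_rv !indicE !mem_le [Z w * (_ - _)]mulrBr. Qed.

Lemma slack_ge0 v : v <= m -> forall w, 0 <= slack Y v w.
Proof. by move=> vm w; rewrite slackE subr_ge0 step_slack_ge0// ltW. Qed.

Let mA v : measurable [set w | Y w <= v]. Proof. exact: measurable_fun_le_cst. Qed.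

Let integrable_ZY : P.-integrable setT (EFin \o (fun w => Z w * Y w)).
Proof.
apply: (integrable_mulZ mY (k := m)) => w.
by have /andP[Y0 Ym] := Y_bounds w; rewrite ger0_norm.
Qed.

Let integrable_Z_step v : P.-integrable setT (EFin \o (fun w => Z w * step_rv v w)).
Proof.
apply: (integrable_mulZ (measurable_step_rv v) (k := `|m| + `|v|)) => w.
by rewrite /step_rv; case: ltP => _; rewrite ?lerDl ?lerDr.
Qed.

Let integrable_level_diff v : P.-integrable setT
  (EFin \o (fun w => \1_[set w | Y w <= v] w - \1_B w)).
Proof.
by apply: integrableB_EFin => //;
  [exact: (integrable_indic P (mA v)) | exact: (integrable_indic P mB)].
Qed.

Lemma integrable_slack v : P.-integrable setT (EFin \o slack Y v).
Proof.
rewrite /slack; apply: (@integrableB_EFin _ _ _ P setT measurableT); first exact: integrableB_EFin.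
exact: integrableZl_EFin.
Qed.

Lemma Rintegral_slack v : Rintegral P setT (slack Y v) =
  m - (m - v) * beta - Rintegral P setT (fun w => Z w * Y w)
  - (m - v) * c * (fine (P [set w | Y w <= v]) - p).
Proof.
rewrite RintegralB//; [|exact: integrableB_EFin|exact: integrableZl_EFin].
rewrite RintegralB// Rintegral_Z_step RintegralZl// RintegralB//;
  [|exact: (integrable_indic P (mA v)) | exact: (integrable_indic P mB)].
by rewrite !Rintegral_indic// PZc.
Qed.

Let p_le_fine v : (p%:E <= P [set w | (Y w <= v)%R])%E -> p <= fine (P [set w | Y w <= v]).
Proof. by rewrite -lee_fin fineK// fin_num_measure. Qed.

Lemma Rintegral_ZY_le_step v : v <= m -> (p%:E <= P [set w | (Y w <= v)%R])%E ->
  Rintegral P setT (fun w => Z w * Y w) <= m - (m - v) * beta.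
Proof.
move=> vm pA.
have : 0 <= Rintegral P setT (slack Y v) := Rintegral_ge0 P (fun w _ => slack_ge0 vm w).
have : 0 <= (m - v) * c * (fine (P [set w | Y w <= v]) - p).
  by rewrite !mulr_ge0 ?subr_ge0 ?p_le_fine.
rewrite Rintegral_slack; lra.
Qed.

Lemma ae_eq_step v : v < m -> (p%:E <= P [set w | (Y w <= v)%R])%E ->
  m - (m - v) * beta <= Rintegral P setT (fun w => Z w * Y w) ->
  {ae P, forall w, Y w = step_rv v w}.
Proof.
move=> vm pA budget.
have slack0 : Rintegral P setT (slack Y v) = 0.
  apply/le_anti/andP; split; last first.
    by apply: Rintegral_ge0 => w _; apply: slack_ge0; exact: ltW.
  rewrite Rintegral_slack.
  have : 0 <= (m - v) * c * (fine (P [set w | Y w <= v]) - p).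
    by rewrite !mulr_ge0 ?subr_ge0 ?p_le_fine// ltW.
  lra.
have ae_slack0 : {ae P, forall w, slack Y v w = 0}.
  have islack := integrable_slack v.
  have int0 : (\int[P]_w (EFin \o slack Y v) w = 0)%E.
    by rewrite -(fineK (integrable_fin_num measurableT islack)); congr EFin.
  have := (ae_eq_integral_abs P measurableT (measurable_int _ islack)).1.
  rewrite (eq_integral (EFin \o slack Y v)) => [|w _]; last first.
    by rewrite /= ger0_norm//; apply: slack_ge0; exact: ltW.
  by move=> ae0; apply: filterS (ae0 int0) => w slack_w0; apply: EFin_inj; exact: slack_w0.
have Y_le_Z_le : {ae P, forall w, Y w <= v -> Z w <= c}.
  apply: filterS ae_slack0 => w /eqP; rewrite slackE subr_eq0 => /eqP slack_w0 Ywv.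
  exact: step_slack_eq0_le (ltW (Z_gt0 w)) Ywv vm slack_w0.
have Z_le_Y_le : {ae P, forall w, Z w <= c -> Y w <= v}.
  apply: (ae_imply_of_le_measure (measurable_fun_le_cst v mY) mB Y_le_Z_le).
  by apply: le_trans pA; rewrite -PZc.
apply: filterS (filterI ae_slack0 (filterI Y_le_Z_le Z_le_Y_le)) => w [/eqP + [YZ ZY]].
by rewrite slackE subr_eq0 => /eqP; exact: step_slack_eq0.
Qed.

Lemma Rintegral_ZY_le_VaR : p <= 1 ->
  Rintegral P setT (fun w => Z w * Y w) <= m - (m - VaR P p Y) * beta.
Proof.
move=> p_le1; have [_ VaR_le_m attained] := VaR_bounded P p_gt0
  (fun w => (andP (Y_bounds w)).1) p_le1 mY (fun w => (andP (Y_bounds w)).2).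
exact: Rintegral_ZY_le_step.
Qed.

End slack.

End step_payoff.

Section admissible_payoffs.
Context d (T : measurableType d) (R : realType) (P : probability T R).
Variables (X : T -> R) (gamma : R -> R) (p x0 m c : R).
Hypotheses (mX : measurable_fun setT X) (mgamma : measurable_fun setT gamma)
  (gamma_gt0 : forall x, 0 < gamma x) (Egamma : (\int[P]_w (gamma (X w))%:E = 1%:E)%E)
  (p_gt0 : 0 < p) (p_le1 : p <= 1) (m_ge0 : 0 <= m) (x0_lt_m : x0 < m) (c_ge0 : 0 <= c)
  (PB : P [set w | gamma (X w) <= c] = p%:E).

Local Notation Gbd := (Gbd P X gamma x0 m).
Local Notation VaRX g := (VaR P p (g \o X)).
Local Notation gstep v := (fun x : R => if c < gamma x then m else v).
Local Notation beta := (beta P (gamma \o X) c).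
Local Notation q := (inf [set VaRX g | g in Gbd]).

Let mZ : measurable_fun setT (gamma \o X). Proof. exact: measurableT_comp. Qed.

Let Z_gt0 w : 0 < (gamma \o X) w. Proof. exact: gamma_gt0. Qed.

Lemma Gbd_rv g : Gbd g ->
  [/\ measurable_fun setT (g \o X), forall w, 0 <= g (X w) <= m
    & x0 <= Rintegral P setT (fun w => gamma (X w) * g (X w))].
Proof.
case=> mg budget g_bounds; have mgX := measurableT_comp mg mX.
split => //; rewrite -lee_fin /Rintegral fineK//; apply: integrable_fin_num => //.
apply: (integrable_mulZ mZ Z_gt0 Egamma mgX (k := m)) => w.
by have /andP[g0 gm] := g_bounds w; rewrite ger0_norm.
Qed.

Lemma VaR_Gbd g : Gbd g ->
  [/\ 0 <= VaRX g, VaRX g <= m & (p%:E <= P [set w | (g (X w) <= VaRX g)%R])%E].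
Proof.
case/Gbd_rv => mgX g_bounds _.
exact: (VaR_bounded P p_gt0 (fun w => (andP (g_bounds w)).1) p_le1 mgX
  (fun w => (andP (g_bounds w)).2)).
Qed.

Lemma Gbd_budget g : Gbd g -> x0 <= m - (m - VaRX g) * beta.
Proof.
case/Gbd_rv => mgX g_bounds x0_le; apply: le_trans x0_le _.
exact: (Rintegral_ZY_le_VaR mZ Z_gt0 Egamma p_gt0 c_ge0 PB mgX g_bounds p_le1).
Qed.

Lemma Gbd_step (v : R) : 0 <= v <= m -> x0 <= m - (m - v) * beta -> Gbd (gstep v).
Proof.
move=> v_bounds budget; split.
- exact: (measurable_step_rv m c mgamma v).
- move: budget; rewrite -(Rintegral_Z_step m c mZ Z_gt0 Egamma) -lee_fin /Rintegral fineK//.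
  apply: integrable_fin_num => //.
  apply: (integrable_mulZ mZ Z_gt0 Egamma (measurable_step_rv m c mZ v) (k := m)) => w.
  by have /andP[s0 sm] := step_rv_bounds (gamma \o X) c v_bounds w; rewrite ger0_norm.
- exact: (step_rv_bounds (gamma \o X) c v_bounds).
Qed.

Lemma VaR_gstep_le (v : R) : 0 <= v -> VaRX (gstep v) <= v.
Proof. exact: (VaR_step_le mZ p_gt0 m_ge0 PB). Qed.

Let Gbd_gstep_m : Gbd (gstep m).
Proof. by apply: Gbd_step; rewrite ?m_ge0 ?lexx// subrr mul0r subr0 ltW. Qed.

Lemma inf_VaR_le g : Gbd g -> q <= VaRX g.
Proof.
move=> Gg; apply: ge_inf; last by exists g.
by exists 0 => _ [h Gh <-]; have [] := VaR_Gbd Gh.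
Qed.

Lemma inf_VaR_bounds : 0 <= q <= m.
Proof.
apply/andP; split; last exact: le_trans (inf_VaR_le Gbd_gstep_m) (VaR_gstep_le m_ge0).
apply: lb_le_inf; first by exists (VaRX (gstep m)), (gstep m).
by move=> _ [h Gh <-]; have [] := VaR_Gbd Gh.
Qed.

Lemma inf_VaR_budget : x0 <= m - (m - q) * beta.
Proof.
suff : x0 - m + m * beta <= beta * q by lra.
apply: lb_le_mul_inf; first exact: beta_ge0.
  by exists (VaRX (gstep m)), (gstep m).
by move=> _ [g /Gbd_budget g_budget <-]; lra.
Qed.

Lemma inf_VaR_tight : 0 < q -> m - (m - q) * beta <= x0.
Proof.
move=> q_gt0; rewrite leNgt; apply/negP => x0_lt.
have [y /andP[y_ge0 y_lt_q] budget_y] : exists2 y : R, 0 <= y < q & x0 <= m - m * beta + beta * y.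
  by apply: affine_le_below; [exact: beta_ge0 | exact: q_gt0 | lra].
have /andP[_ q_le_m] := inf_VaR_bounds.
have /inf_VaR_le : Gbd (gstep y) by apply: Gbd_step; [rewrite y_ge0; lra | lra].
by have := VaR_gstep_le y_ge0; lra.
Qed.

Lemma Gbd_ae_eq_gstep g : Gbd g -> VaRX g < m -> m - (m - VaRX g) * beta <= x0 ->
  {ae P, forall w, g (X w) = gstep (VaRX g) (X w)}.
Proof.
move=> Gg VaR_lt_m tight; have [mgX g_bounds x0_le] := Gbd_rv Gg.
have [_ _ attained] := VaR_Gbd Gg.
exact: (ae_eq_step mZ Z_gt0 Egamma c_ge0 PB mgX g_bounds VaR_lt_m attained (le_trans tight x0_le)).
Qed.

End admissible_payoffs.

Theorem corollary2 (d : measure_display) (T : measurableType d) (R : realType)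
  (P : probability T R) (X : T -> R) (gamma : R -> R) (p m x0 : R) :
  atomless P ->
  measurable_fun setT X ->
  (forall w, 0 <= X w) ->
  has_pos_density_on_support P X ->
  continuous gamma ->
  (forall x, 0 < gamma x) ->
  (\int[P]_w (gamma (X w))%:E = 1%:E)%E ->
  P.-integrable setT (fun w => (gamma (X w) * X w)%:E) ->
  0 < p < 1 ->
  0 < m -> 0 <= x0 -> x0 < m ->
  let q' := inf [set VaR P p (g \o X) | g in Gbd P X gamma x0 m] in
  let c := VaR P p (gamma \o X) in
  0 < q' ->
  P [set w | gamma (X w) <= c] = p%:E ->
  let gstar := fun x : R => if c < gamma x then m else q' in
  [/\ Gbd P X gamma x0 m gstar,
      (forall g, Gbd P X gamma x0 m g -> VaR P p (gstar \o X) <= VaR P p (g \o X))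
    & (forall g, Gbd P X gamma x0 m g ->
         (forall h, Gbd P X gamma x0 m h -> VaR P p (g \o X) <= VaR P p (h \o X)) ->
         {ae P, forall w, g (X w) = gstar (X w)})].
Proof.
move=> _ mX _ _ cgamma gamma_gt0 Egamma _ /andP[p_gt0 /ltW p_le1] /ltW m_ge0 _ x0_lt_m.
move=> q' c q'_gt0 PB gstar; have mgamma := continuous_measurable_fun cgamma.
have c_ge0 : 0 <= c.
  by apply: (VaR_ge p_gt0 (a := 0) (fun w => ltW (gamma_gt0 (X w))) (x := c)); rewrite PB.
have /andP[q'_ge0 q'_le_m] : 0 <= q' <= m by exact: (inf_VaR_bounds (c := c)).
have VaR_gstar : VaR P p (gstar \o X) <= q' by exact: VaR_gstep_le.
have Gbd_gstar : Gbd P X gamma x0 m gstar.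
  by apply: Gbd_step; rewrite ?q'_ge0//; exact: inf_VaR_budget.
have q'_le g : Gbd P X gamma x0 m g -> q' <= VaR P p (g \o X) by exact: inf_VaR_le.
split => // [g Gg | g Gg g_opt]; first exact: le_trans VaR_gstar (q'_le g Gg).
have VaR_g : VaR P p (g \o X) = q'.
  by apply/le_anti; rewrite q'_le// andbT (le_trans (g_opt _ Gbd_gstar)).
have tight : m - (m - q') * beta P (gamma \o X) c <= x0 by exact: inf_VaR_tight.
have beta_ge0 : 0 <= beta P (gamma \o X) c := beta_ge0 P c (fun w => gamma_gt0 (X w)).
by rewrite /gstar -VaR_g; apply: (Gbd_ae_eq_gstep (x0 := x0)); rewrite ?VaR_g//; nra.
Qed.
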